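(* Let $X$ be a regular Hausdorff $g$-first-countable space. Then $\mathcal{F}(X)$ is $g$-first-countable if and only if $\mathcal{F}(X)$ is sequential.
   Context: $\mathcal{F}(X)$ is the set of nonempty finite subsets of $X$ with the Vietoris topology (base: $\langle U_1,\dots,U_k\rangle=\{A: A\subset\bigcup_i U_i,\ A\cap U_j\neq\emptyset\ \forall j\}$, $U_i$ open in $X$). A space is sequential if every sequentially open set (a set $U$ such that every sequence converging to a point of $U$ is eventually in $U$) is open. A weak base for $Y$ is a cover $\mathcal{P}=\bigcup_{y\in Y}\mathcal{P}_y$ such that: for $U,V\in\mathcal{P}_y$ there is $W\in\mathcal{P}_y$ with $W\subset U\cap V$; each member of $\mathcal{P}_y$ contains $y$ and for each open $U\ni y$ some $P\in\mathcal{P}_y$ has $P\subset U$; and $G\subset Y$ is open whenever for each $y\in G$ some $P\in\mathcal{P}_y$ has $P\subset G$. $Y$ is $g$-first-countable if it has a weak base with each $\mathcal{P}_y$ countable. *)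

From HB Require Import structures.
From mathcomp Require Import all_boot all_order.
From mathcomp Require Import all_classical topology.
Set Implicit Arguments. Unset Strict Implicit. Unset Printing Implicit Defensive.
Local Open Scope classical_set_scope.

Section Generic.
Variables (T : Type) (op : set (set T)).

Definition seq_conv (u : nat -> T) (x : T) : Prop :=
  forall U : set T, op U -> U x -> exists N, forall n, (N <= n)%N -> U (u n).

Definition seq_open (U : set T) : Prop :=
  forall (u : nat -> T) (x : T), seq_conv u x -> U x ->
    exists N, forall n, (N <= n)%N -> U (u n).

Definition sequential_sp : Prop := forall U : set T, seq_open U -> op U.

Definition weak_base (P : T -> set (set T)) : Prop :=
  [/\ (forall y (U V : set T), P y U -> P y V -> exists2 W, P y W & W `<=` U `&` V),
      (forall y (W : set T), P y W -> W y),
      (forall y (U : set T), op U -> U y -> exists2 W, P y W & W `<=` U) &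
      (forall G : set T, (forall y, G y -> exists2 W, P y W & W `<=` G) -> op G)].

Definition g_first_countable : Prop :=
  exists P : T -> set (set T), weak_base P /\ forall y, countable (P y).
End Generic.

Record finsub (X : Type) := FinSub {
  fs_set : set X;
  fs_fin : finite_set fs_set;
  fs_ne : fs_set !=set0 }.

Definition vietoris_basic (X : Type) (Us : seq (set X)) : set (finsub X) :=
  [set A | (forall x, fs_set A x -> exists2 U, U \in Us & U x) /\
           (forall U, U \in Us -> exists x, fs_set A x /\ U x)].

Definition vietoris_open (X : topologicalType) (G : set (finsub X)) : Prop :=
  forall A, G A -> exists Us : seq (set X),
    [/\ (forall U, U \in Us -> open U), vietoris_basic Us A & vietoris_basic Us `<=` G].

(* A g-first-countable space is sequential: if a sequentially open set U
   contained no member of a nested countable weak base at some y in U, a choice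
   of points outside U in every member would be a sequence converging to y that
   never enters U.

   Conversely, fix a nested countable weak base D y n of X and, for a finite
   A, consider the Vietoris sets <D a m : a in A>. Every Vietoris open set
   around A contains one of them, and every sequence u converging to A in F(X)
   eventually lies in each of them. The latter rests on regularity: the points
   of the u n outside A can only accumulate on A. So when F(X) is sequential,
   the sets <D a m : a in A> are a countable weak base of F(X). *)

From HB Require Import structures.
From mathcomp Require Import all_boot all_order.
From mathcomp Require Import all_classical topology.
Set Implicit Arguments. Unset Strict Implicit. Unset Printing Implicit Defensive.
Local Open Scope classical_set_scope.

Lemma countable_range_enum (T : choiceType) (A : set T) :
  countable A -> A !=set0 -> exists e : nat -> T, range e = A.
Proof.
move=> /countable_injP[f finj] [x0 Ax0].
exists (fun k => xget x0 [set x | A x /\ f x = k]); apply/seteqP; split.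
  by move=> _ [k _ <-]; case: xgetP => [y _ []|].
move=> x Ax; exists (f x) => //; apply: xget_unique => // y [Ay fyx].
by apply: finj; rewrite ?inE.
Qed.

Lemma near_forall_finite (T : Type) (I : choiceType) (F : set_system T)
    (A : set I) (Q : I -> T -> Prop) :
  Filter F -> finite_set A -> (forall i, A i -> \forall t \near F, Q i t) ->
  \forall t \near F, forall i, A i -> Q i t.
Proof.
move=> FF /finite_fsetP[D ->] AQ.
by apply: filterS (filter_bigI FF AQ) => t DQ i Di; exact: DQ.
Qed.

Lemma seq_conv_near (T : Type) (op : set (set T)) (u : nat -> T) (x : T) :
  seq_conv op u x -> forall U, op U -> U x -> \forall n \near \oo, U (u n).
Proof. by move=> ux U oU Ux; have [N UuN] := ux U oU Ux; exists N. Qed.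

Section NestedWeakBase.
Variables (T : Type) (op : set (set T)) (D : T -> nat -> set T).
Hypothesis D_nested : forall y n m, (n <= m)%N -> D y m `<=` D y n.

Lemma weak_base_of_nested :
    (forall y n, D y n y) ->
    (forall y U, op U -> U y -> exists n, D y n `<=` U) ->
    (forall G, (forall y, G y -> exists n, D y n `<=` G) -> op G) ->
  weak_base op (fun y => range (D y)).
Proof.
move=> Dmem Dsub Dopen; split.
- move=> y _ _ [i _ <-] [j _ <-]; exists (D y (maxn i j)) => //.
  by move=> x Dx; split; apply: (D_nested _ Dx); rewrite ?leq_maxl ?leq_maxr.
- by move=> y _ [n _ <-].
- by move=> y U oU Uy; have [n DU] := Dsub y U oU Uy; exists (D y n).
- move=> G GD; apply: Dopen => y /GD[_ [n _ <-] DG]; by exists n.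
Qed.

Hypothesis D_weak_base : weak_base op (fun y => range (D y)).

Lemma seq_weak_base_mem y n : D y n y.
Proof. by case: D_weak_base => _ Dmem _ _; exact: Dmem. Qed.

Lemma nested_weak_base_near y U :
  op U -> U y -> \forall n \near \oo, D y n `<=` U.
Proof.
case: D_weak_base => _ _ Dsub _ oU Uy.
have [_ [k _ <-] DU] := Dsub y U oU Uy.
by exists k => // n /= kn; exact: subset_trans (D_nested kn) DU.
Qed.

Lemma seq_weak_base_open G : (forall y, G y -> exists n, D y n `<=` G) -> op G.
Proof.
case: D_weak_base => _ _ _ Dopen GD.
by apply: Dopen => y /GD[n DG]; exists (D y n).
Qed.

Lemma nested_weak_base_sequential : sequential_sp op.
Proof.
move=> U seqU; apply: seq_weak_base_open => y Uy.
apply: contrapT => noDU.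
have /choice[x xP] n : exists x, D y n x /\ ~ U x.
  apply: contrapT => DU; apply: noDU; exists n => z Dz.
  by apply: contrapT => nUz; apply: DU; exists z.
have xy : seq_conv op x y.
  move=> V oV Vy; have [k _ DV] := nested_weak_base_near oV Vy.
  by exists k => n kn; apply: DV kn _ (xP n).1.
have [N UxN] := seqU x y xy Uy.
exact: (xP N).2 (UxN N (leqnn N)).
Qed.

Lemma seq_weak_base_g_first_countable : g_first_countable op.
Proof.
exists (fun y => range (D y)); split => // y.
exact: sub_countable (card_image_le _ _) (countableP _).
Qed.

End NestedWeakBase.

Lemma g_first_countable_nested (T : Type) (op : set (set T)) : op setT ->
  g_first_countable op -> exists2 D : T -> nat -> set T,
    (forall y n m, (n <= m)%N -> D y m `<=` D y n) &
    weak_base op (fun y => range (D y)).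
Proof.
move=> opT [P [[Pmeet Pmem Psub Popen] Pcount]].
have /choice[e eP] y : exists e : nat -> set T, range e = P y.
  apply: countable_range_enum; first exact: Pcount.
  by have [W PW _] := Psub y setT opT I; exists W.
pose D y := fix D n := if n is k.+1
  then xget setT [set W | P y W /\ W `<=` D k `&` e y k.+1] else e y 0.
have Pe y k : P y (e y k) by rewrite -eP; exists k.
have Dstep y n :
    P y (D y n) -> P y (D y n.+1) /\ D y n.+1 `<=` D y n `&` e y n.+1.
  move=> PDn; have [W PW WDe] := Pmeet y _ _ PDn (Pe y n.+1).
  exact: (@xgetI _ setT [set W | P y W /\ W `<=` D y n `&` e y n.+1] W).
have PD y n : P y (D y n).
  by elim: n => [|n /Dstep[]//]; exact: Pe.
have De y n : D y n `<=` e y n.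
  by case: n => [|n] // x /(Dstep y n (PD y n)).2[].
have Dnested y n m : (n <= m)%N -> D y m `<=` D y n.
  elim: m => [|m IH]; first by rewrite leqn0 => /eqP ->.
  rewrite leq_eqVlt => /orP[/eqP -> //|/IH Dmn x /(Dstep y m (PD y m)).2[Dx _]].
  exact: Dmn.
exists D => //; apply: weak_base_of_nested => //.
- by move=> y n; exact: Pmem (PD y n).
- move=> y U oU Uy; have [W + WU] := Psub y U oU Uy.
  by rewrite -eP => -[k _ ekW]; exists k => x /De; rewrite ekW; exact: WU.
- by move=> G GD; apply: Popen => y /GD[n DG]; exists (D y n).
Qed.

Section Vietoris.
Variable X : topologicalType.
Local Notation vconv := (seq_conv (@vietoris_open X)).

Lemma vietoris_open_basic (Us : seq (set X)) :
  (forall U, U \in Us -> open U) -> vietoris_open (vietoris_basic Us).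
Proof. by move=> oUs B UsB; exists Us; split. Qed.

Lemma vietoris_openT : vietoris_open (@setT (finsub X)).
Proof.
move=> A _; exists [:: setT]; split => //.
- by move=> U; rewrite mem_seq1 => /eqP ->; exact: openT.
- split=> [x _|U]; first by exists setT; rewrite ?mem_seq1.
  by rewrite mem_seq1 => /eqP ->; have [x Ax] := fs_ne A; exists x.
Qed.

Lemma cvg_vietoris_sub (u : nat -> finsub X) A V : vconv u A -> open V ->
  fs_set A `<=` V -> \forall n \near \oo, fs_set (u n) `<=` V.
Proof.
move=> uA oV AV.
have oB : vietoris_open (vietoris_basic [:: V]).
  by apply: vietoris_open_basic => U; rewrite mem_seq1 => /eqP ->.
have BA : vietoris_basic [:: V] A.
  split=> [x Ax|U]; first by exists V; rewrite ?mem_seq1 //; exact: AV.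
  rewrite mem_seq1 => /eqP ->; have [x Ax] := fs_ne A.
  by exists x; split; last exact: AV.
apply: filterS (seq_conv_near uA oB BA) => n [uV _] x /uV[U].
by rewrite mem_seq1 => /eqP ->.
Qed.

Lemma cvg_vietoris_meet (u : nat -> finsub X) A V a : vconv u A -> open V ->
  fs_set A a -> V a -> \forall n \near \oo, exists2 b, fs_set (u n) b & V b.
Proof.
move=> uA oV Aa Va.
have oB : vietoris_open (vietoris_basic [:: setT; V]).
  apply: vietoris_open_basic => U.
  by rewrite !inE => /orP[]/eqP ->//; exact: openT.
have BA : vietoris_basic [:: setT; V] A.
  split=> [x _|U]; first by exists setT; rewrite ?inE ?eqxx.
  by rewrite !inE => /orP[]/eqP ->; exists a.
apply: filterS (seq_conv_near uA oB BA) => n [_ /(_ V)].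
by rewrite !inE eqxx orbT => /(_ isT)[b []]; exists b.
Qed.

Hypothesis X_regular : regular_space X.
Hypothesis X_hausdorff : hausdorff_space X.

Lemma finite_closed (A : set X) : finite_set A -> closed A.
Proof.
exact: (accessible_finite_set_closed.1 (hausdorff_accessible X_hausdorff)).
Qed.

(* A closed neighbourhood of y missing A is eventually avoided by the u n, so
   it meets H in finitely many points only. *)
Lemma cvg_vietoris_closedU (u : nat -> finsub X) A (H : set X) : vconv u A ->
  H `<=` \bigcup_n fs_set (u n) -> closed (H `|` fs_set A).
Proof.
move=> uA Hu; rewrite -[_ `|` _]setCK; apply: open_closedC.
rewrite openE => y nHAy.
have [M My clMA] : filter_from (nbhs y) closure (~` fs_set A).
  apply: X_regular; apply: open_nbhs_nbhs.
  split; last by move=> Ay; apply: nHAy; right.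
  exact: closed_openC (finite_closed (fs_fin A)).
have [K _ uKM] : \forall n \near \oo, fs_set (u n) `<=` ~` closure M.
  apply: cvg_vietoris_sub uA _ _; first exact/closed_openC/closed_closure.
  by move=> a Aa clMa; exact: clMA clMa Aa.
pose F := H `&` \bigcup_(n in `I_K) fs_set (u n).
have oF : open (~` F).
  apply: closed_openC; apply: finite_closed; apply: finite_setIr.
  by apply: bigcup_finite => // n _; exact: fs_fin.
have nFy : ~ F y by move=> [Hy _]; apply: nHAy; left.
apply: filterS (filterI My (open_nbhs_nbhs (conj oF nFy))) => z [Mz nFz].
have clMz : closure M z by exact: subset_closure.
move=> [Hz|Az]; last exact: clMA clMz Az.
have [n _ unz] := Hu z Hz; case: (leqP K n) => [Kn|nK].
  exact: uKM n Kn z unz clMz.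
by apply: nFz; split => //; exists n.
Qed.

Variable D : X -> nat -> set X.
Hypothesis D_nested : forall y n m, (n <= m)%N -> D y m `<=` D y n.
Hypothesis D_weak_base : weak_base open (fun y => range (D y)).

Lemma open_setC_cvg (u : nat -> finsub X) A (S : set X) : vconv u A ->
    S `<=` fs_set A `|` \bigcup_n fs_set (u n) ->
    (forall a, fs_set A a -> ~ S a -> exists n, D a n `<=` ~` S) ->
  open (~` S).
Proof.
move=> uA SAu AS; apply: (seq_weak_base_open D_weak_base) => y nSy.
have [Ay|nAy] := pselect (fs_set A y); first exact: AS.
have HA : closed ((S `\` fs_set A) `|` fs_set A).
  apply: cvg_vietoris_closedU uA _ => z [/SAu[]//].
have nHAy : ~ ((S `\` fs_set A) `|` fs_set A) y by move=> [[]|].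
have [n Dn] :=
  filter_ex (nested_weak_base_near D_nested D_weak_base (closed_openC HA) nHAy).
exists n => z /Dn nHAz Sz; apply: nHAz.
by have [Az|nAz] := pselect (fs_set A z); [right|left].
Qed.

Definition vietoris_nbhd (A : finsub X) (m : nat) : set (finsub X) :=
  [set B | (forall b, fs_set B b -> exists2 a, fs_set A a & D a m b) /\
           (forall a, fs_set A a -> exists2 b, fs_set B b & D a m b)].

Lemma vietoris_nbhd_nested A n m : (n <= m)%N ->
  vietoris_nbhd A m `<=` vietoris_nbhd A n.
Proof.
move=> nm B [BD DB]; split.
  by move=> b /BD[a Aa Dab]; exists a => //; exact: D_nested nm _ Dab.
by move=> a /DB[b Bb Dab]; exists b => //; exact: D_nested nm _ Dab.
Qed.

Lemma vietoris_nbhd_mem A m : vietoris_nbhd A m A.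
Proof.
by split=> [b Ab|a Aa]; [exists b|exists a] => //;
  exact: seq_weak_base_mem D_weak_base _ _.
Qed.

Lemma vietoris_nbhd_sub A G : vietoris_open G -> G A ->
  exists m, vietoris_nbhd A m `<=` G.
Proof.
move=> oG GA; have [Us [oUs [AUs UsA] UsG]] := oG A GA.
have DUs : \forall m \near \oo,
    forall a, fs_set A a -> forall U, [set` Us] U -> U a -> D a m `<=` U.
  apply: near_forall_finite (fs_fin A) _ => a Aa.
  apply: near_forall_finite (finite_seq Us) _ => U UsU.
  have [Ua|nUa] := pselect (U a); last by apply: nearW => m /nUa.
  by apply: filterS (nested_weak_base_near D_nested D_weak_base (oUs U UsU) Ua).
have [m DmUs] := filter_ex DUs; exists m => B [BD DB]; apply: UsG; split.
  move=> b /BD[a Aa Dab]; have [U UsU Ua] := AUs a Aa.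
  by exists U => //; exact: DmUs a Aa U UsU Ua b Dab.
move=> U UsU; have [a [Aa Ua]] := UsA U UsU; have [b Bb Dab] := DB a Aa.
by exists b; split => //; exact: DmUs a Aa U UsU Ua b Dab.
Qed.

Lemma cvg_vietoris_nbhd_cover (u : nat -> finsub X) A m : vconv u A ->
  \forall n \near \oo,
    forall b, fs_set (u n) b -> exists2 a, fs_set A a & D a m b.
Proof.
move=> uA.
pose S :=
  [set c | (exists n, fs_set (u n) c) /\ ~ exists2 a, fs_set A a & D a m c].
have oS : open (~` S).
  apply: open_setC_cvg uA _ _ => [c [[n unc] _]|a Aa _].
    by right; exists n.
  by exists m => c Dc [_]; apply; exists a.
have AS : fs_set A `<=` ~` S.
  move=> a Aa [_]; apply; exists a => //.
  exact: seq_weak_base_mem D_weak_base _ _.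
apply: filterS (cvg_vietoris_sub uA oS AS) => n uS b unb.
by apply: contrapT => nD; apply: (uS b unb); split => //; exists n.
Qed.

Lemma cvg_vietoris_nbhd_meet (u : nat -> finsub X) A m a : vconv u A ->
    fs_set A a -> (forall z, fs_set A z -> D a m z -> z = a) ->
  \forall n \near \oo, exists2 b, fs_set (u n) b & D a m b.
Proof.
move=> uA Aa Da.
pose S := [set c |
  (exists n, fs_set (u n) c /\ forall b, fs_set (u n) b -> ~ D a m b) \/
  (fs_set A c /\ c <> a)].
have oS : open (~` S).
  apply: open_setC_cvg uA _ _ => [c [[n [unc _]]|[Ac _]]|a' Aa' nSa'].
  - by right; exists n.
  - by left.
  have a'a : a' = a by apply: contrapT => a'a; apply: nSa'; right.
  rewrite a'a; exists m => c Dc [[n [unc unD]]|[Ac ca]].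
    exact: unD c unc Dc.
  exact: ca (Da c Ac Dc).
have nSa : ~ S a.
  move=> [[n [una unD]]|[_ aa]]; last exact: aa.
  exact: unD a una (seq_weak_base_mem D_weak_base _ _).
apply: filterS (cvg_vietoris_meet uA oS Aa nSa) => n [b unb nSb].
apply: contrapT => nD; apply: nSb; left; exists n; split => // c unc Dc.
by apply: nD; exists c.
Qed.

Lemma cvg_vietoris_nbhd (u : nat -> finsub X) A m : vconv u A ->
  \forall n \near \oo, vietoris_nbhd A m (u n).
Proof.
move=> uA.
have isolated : \forall k \near \oo,
    forall a, fs_set A a -> forall z, fs_set A z -> D a k z -> z = a.
  apply: near_forall_finite (fs_fin A) _ => a Aa.
  have oA' : open (~` (fs_set A `\` [set a])).
    apply: closed_openC; apply: finite_closed; apply: finite_setD.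
    exact: fs_fin.
  have nA'a : ~ (fs_set A `\` [set a]) a by move=> [_]; apply.
  apply: filterS (nested_weak_base_near D_nested D_weak_base oA' nA'a).
  move=> k DA z Az Dz.
  by apply: contrapT => za; exact: (DA z Dz (conj Az za)).
have [k [mk kiso]] := filter_ex (filterI (nbhs_infty_ge m) isolated).
have meet : \forall n \near \oo,
    forall a, fs_set A a -> exists2 b, fs_set (u n) b & D a k b.
  apply: near_forall_finite (fs_fin A) _ => a Aa.
  exact: cvg_vietoris_nbhd_meet uA Aa (kiso a Aa).
apply: filterS (filterI (cvg_vietoris_nbhd_cover k uA) meet) => n [cover meets].
exact: vietoris_nbhd_nested mk _ (conj cover meets).
Qed.

Lemma sequential_vietoris_weak_base : sequential_sp (@vietoris_open X) ->
  weak_base (@vietoris_open X) (fun A => range (vietoris_nbhd A)).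
Proof.
move=> seqF; apply: weak_base_of_nested.
- exact: vietoris_nbhd_nested.
- exact: vietoris_nbhd_mem.
- exact: vietoris_nbhd_sub.
move=> G GN; apply: seqF => u A uA GA; have [m NG] := GN A GA.
have [N _ uN] := cvg_vietoris_nbhd m uA.
by exists N => n Nn; apply: NG; exact: uN.
Qed.

End Vietoris.

Theorem theorem4p12 (X : topologicalType) :
  regular_space X -> hausdorff_space X -> g_first_countable (@open X) ->
  (g_first_countable (@vietoris_open X) <-> sequential_sp (@vietoris_open X)).
Proof.
move=> X_regular X_hausdorff gfcX; split => [gfcF|seqF].
  have [D D_nested D_weak_base] :=
    g_first_countable_nested (@vietoris_openT X) gfcF.
  exact: nested_weak_base_sequential D_nested D_weak_base.
have [D D_nested D_weak_base] := g_first_countable_nested (@openT X) gfcX.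
apply: seq_weak_base_g_first_countable.
exact: (sequential_vietoris_weak_base X_regular X_hausdorff
  D_nested D_weak_base).
Qed.
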